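(* Let $\mathbb{X},\mathbb{Y}$ be two-dimensional smooth real Banach spaces, with $\mathbb{Y}$ in addition strictly convex. Let $T\in\mathbb{L}(\mathbb{X},\mathbb{Y})$ be of rank one with $\|T\|=1$, and suppose $M_T=\{\pm x\}$. Then $T$ is an extreme contraction if and only if $(x,Tx)$ is not a CPP.
   Context: $M_T=\{x\in S_{\mathbb{X}}:\|Tx\|=\|T\|\}$. A norm one $T$ is an extreme contraction if it is an extreme point of the closed unit ball of $\mathbb{L}(\mathbb{X},\mathbb{Y})$. $B(x,r)=\{u:\|u-x\|<r\}$. $x\perp_B y$ means $\|x+\lambda y\|\ge\|x\|$ for all real $\lambda$; $x^\perp=\{y:x\perp_By\}$. For $x\in S_{\mathbb{X}}$, $y\in S_{\mathbb{Y}}$, $(x,y)$ is a CPP if there exist $r>0,\mu>0$ such that for all $z\in x^\perp\cap S_{\mathbb{X}}$, all $w\in y^\perp\cap S_{\mathbb{Y}}$ and all $a,b\in\mathbb{R}$, $ax+bz\in B(x,r)\cap S_{\mathbb{X}}$ implies $\|ay+b\mu w\|\le1$. *)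

(* R : realType; a 2-dimensional real normed space is modelled
   as 'rV[R]_2 equipped with an arbitrary norm N (every 2-dim real Banach space
   is isometrically isomorphic to such a space; finite dim => complete).
   A linear operator X -> Y is a matrix A : 'M[R]_2 acting on row vectors:
   T x = x *m A. *)
From HB Require Import structures.
From mathcomp Require Import all_boot all_order all_algebra.
From mathcomp Require Import classical_sets reals.
Set Implicit Arguments. Unset Strict Implicit. Unset Printing Implicit Defensive.
Import Order.TTheory GRing.Theory Num.Theory.
Local Open Scope ring_scope.
Local Open Scope classical_set_scope.

Section Defs.
Variable R : realType.
Notation V := 'rV[R]_2.

Definition is_norm (N : V -> R) : Prop :=
  (forall x, N x = 0 -> x = 0) /\
  (forall (a : R) x, N (a *: x) = `|a| * N x) /\
  (forall x y, N (x + y) <= N x + N y).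

Definition sphere (N : V -> R) : set V := [set x | N x = 1].

Definition oball (N : V -> R) (x : V) (r : R) : set V := [set u | N (u - x) < r].

Definition lin_functional (f : V -> R) : Prop :=
  forall (a : R) u v, f (a *: u + v) = a * f u + f v.

Definition support_functional (N : V -> R) (x : V) (f : V -> R) : Prop :=
  lin_functional f /\ f x = 1 /\ forall y, `|f y| <= N y.

Definition smooth (N : V -> R) : Prop :=
  forall x, N x = 1 ->
    forall f g, support_functional N x f -> support_functional N x g ->
      forall y, f y = g y.

Definition strictly_convex (N : V -> R) : Prop :=
  forall x y, N x = 1 -> N y = 1 -> x != y -> N (2^-1 *: (x + y)) < 1.

Definition opnorm (NX NY : V -> R) (A : 'M[R]_2) : R :=
  sup [set NY (x *m A) | x in sphere NX].

Definition norm_attainment_set (NX NY : V -> R) (A : 'M[R]_2) : set V :=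
  [set x | NX x = 1 /\ NY (x *m A) = opnorm NX NY A].

Definition extreme_contraction (NX NY : V -> R) (A : 'M[R]_2) : Prop :=
  opnorm NX NY A = 1 /\
  forall (B C : 'M[R]_2) (t : R), opnorm NX NY B <= 1 -> opnorm NX NY C <= 1 ->
    0 < t < 1 -> A = t *: B + (1 - t) *: C -> B = A /\ C = A.

Definition bj_orth (N : V -> R) (x y : V) : Prop :=
  forall lambda : R, N x <= N (x + lambda *: y).

Definition CPP (NX NY : V -> R) (x y : V) : Prop :=
  NX x = 1 /\ NY y = 1 /\
  exists r mu : R, 0 < r /\ 0 < mu /\
    forall z w : V, bj_orth NX x z -> NX z = 1 ->
      bj_orth NY y w -> NY w = 1 ->
      forall a b : R,
        (a *: x + b *: z) \in (oball NX x r `&` sphere NX) ->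
        NY (a *: y + (b * mu) *: w) <= 1.

End Defs.

(* Write y = T x. As T has rank one and X is smooth, T u = g(u) y where g is
   the support functional at x, and M_T = {x, -x} makes x the only point of
   the unit sphere where g = 1.
   If T = t B + (1 - t) C with B <> T, then S = t (B - T) is nonzero and
   T + S, T - S are contractions. Strict convexity of Y forces S x = 0 and
   smoothness of X forces S to take values in the kernel of the support
   functional at y, so ||(T +- S)(a x + b z)|| <= 1 is the CPP inequality
   with mu = ||S z||.
   Conversely, given a CPP (r, mu), let S u = eps beta(u) w, where beta is
   the coordinate along the kernel of g and w spans the kernel of the support
   functional at y. Near +-x the CPP inequality and convexity give
   ||(T +- S) u|| <= 1; away from +-x, |g| stays below 1 - delta because g
   exposes x, and eps <= delta / 2 then suffices. So T = (T + S)/2 + (T - S)/2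
   is not extreme. *)

From HB Require Import structures.
From mathcomp Require Import all_boot all_order all_algebra.
From mathcomp Require Import classical_sets reals.
From mathcomp Require Import ring lra.
Set Implicit Arguments. Unset Strict Implicit. Unset Printing Implicit Defensive.
Import Order.TTheory GRing.Theory Num.Theory.
Local Open Scope ring_scope.
Local Open Scope classical_set_scope.

Section Coordinates.
Variable R : realType.
Notation V := 'rV[R]_2.

Definition c0 (u : V) : R := u ord0 ord0.
Definition c1 (u : V) : R := u ord0 ord_max.

Lemma rowv2P (u w : V) : c0 u = c0 w -> c1 u = c1 w -> u = w.
Proof.
move=> e0 e1; apply/rowP => j.
by have [->|->] : j = ord0 \/ j = ord_max by
  case: j => -[|[|//]] ?; [left|right]; apply: val_inj.
Qed.

Lemma c0D (u w : V) : c0 (u + w) = c0 u + c0 w. Proof. by rewrite /c0 mxE. Qed.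
Lemma c1D (u w : V) : c1 (u + w) = c1 u + c1 w. Proof. by rewrite /c1 mxE. Qed.
Lemma c0Z a (u : V) : c0 (a *: u) = a * c0 u. Proof. by rewrite /c0 mxE. Qed.
Lemma c1Z a (u : V) : c1 (a *: u) = a * c1 u. Proof. by rewrite /c1 mxE. Qed.
Lemma c0N (u : V) : c0 (- u) = - c0 u. Proof. by rewrite /c0 mxE. Qed.
Lemma c1N (u : V) : c1 (- u) = - c1 u. Proof. by rewrite /c1 mxE. Qed.
Lemma c00 : c0 (0 : V) = 0. Proof. by rewrite /c0 mxE. Qed.
Lemma c10 : c1 (0 : V) = 0. Proof. by rewrite /c1 mxE. Qed.
Definition cE := (c0D, c1D, c0Z, c1Z, c0N, c1N, c00, c10).

Definition det2 (u w : V) : R := c0 u * c1 w - c1 u * c0 w.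

Lemma det2Dl (u v w : V) : det2 (u + v) w = det2 u w + det2 v w.
Proof. by rewrite /det2 !cE; ring. Qed.
Lemma det2Zl a (u w : V) : det2 (a *: u) w = a * det2 u w.
Proof. by rewrite /det2 !cE; ring. Qed.
Lemma det2Dr (u v w : V) : det2 u (v + w) = det2 u v + det2 u w.
Proof. by rewrite /det2 !cE; ring. Qed.
Lemma det2Zr a (u w : V) : det2 u (a *: w) = a * det2 u w.
Proof. by rewrite /det2 !cE; ring. Qed.
Lemma det2xx (u : V) : det2 u u = 0.
Proof. by rewrite /det2 mulrC subrr. Qed.

(* Cramer's rule in the basis (u, w). *)
Lemma det2_decomp (u w v : V) : det2 u w != 0 ->
  v = (det2 v w / det2 u w) *: u + (det2 u v / det2 u w) *: w.
Proof. by move=> uw; apply: rowv2P; rewrite !cE /det2; field. Qed.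

Lemma det2_eq0 (u v : V) : u != 0 -> det2 u v = 0 -> exists c, v = c *: u.
Proof.
rewrite /det2 => u0 uv.
have [a0|a0] := eqVneq (c0 u) 0.
  have b0 : c1 u != 0.
    by apply: contra u0 => /eqP b0; apply/eqP/rowv2P; rewrite cE.
  exists (c1 v / c1 u); apply: rowv2P; rewrite !cE ?divfK // a0 mulr0.
  by apply/eqP; move/eqP: uv; rewrite a0 mul0r sub0r oppr_eq0 mulf_eq0 (negbTE b0).
exists (c0 v / c0 u); apply: rowv2P; rewrite !cE ?divfK //.
by rewrite mulrAC; apply: (mulIf a0); rewrite divfK //; nra.
Qed.

Definition perp (u : V) : V := \row_j (if j == ord0 then - c1 u else c0 u).

Lemma det2_perp_neq0 (u : V) : u != 0 -> det2 u (perp u) != 0.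
Proof.
have -> : det2 u (perp u) = c0 u ^+ 2 + c1 u ^+ 2.
  by rewrite /det2 [c0 (perp _)]/c0 [c1 (perp _)]/c1 !mxE /=; ring.
move=> u0; apply: contra u0 => /eqP uu; apply/eqP/rowv2P; rewrite !cE; nra.
Qed.

Lemma mul_tr_perp (u x w : V) : u *m ((perp x)^T *m w) = det2 x u *: w.
Proof.
rewrite mulmxA [u *m _]mx11_scalar mul_scalar_mx; congr (_ *: _).
rewrite !mxE !big_ord_recl big_ord0 !mxE /det2 /c0 /c1 /=.
have -> : lift ord0 ord0 = ord_max :> 'I_2 by apply: val_inj.
rewrite /=; ring.
Qed.

Lemma det_rank_lt n (A : 'M[R]_n) : (\rank A < n)%N -> \det A = 0.
Proof.
move=> rA; apply/eqP; apply: contraTT rA => dA.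
by rewrite mxrank_unit ?ltnn // unitmxE unitfE.
Qed.

Lemma mx_eq0 m n (S : 'M[R]_(m, n)) : (forall u : 'rV_m, u *m S = 0) -> S = 0.
Proof.
by move=> h; apply/row_matrixP => i; rewrite rowE h linear0.
Qed.

End Coordinates.

Section LinearFunctional.
Variable R : realType.
Variable f : 'rV[R]_2 -> R.
Hypothesis f_lin : lin_functional f.

Lemma lin0 : f 0 = 0.
Proof. by have := f_lin 1 0 0; rewrite scaler0 addr0 mul1r; lra. Qed.
Lemma linZ a u : f (a *: u) = a * f u.
Proof. by have := f_lin a u 0; rewrite addr0 lin0 addr0. Qed.
Lemma linD u v : f (u + v) = f u + f v.
Proof. by have := f_lin 1 u v; rewrite scale1r mul1r. Qed.
Lemma linN u : f (- u) = - f u.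
Proof. by rewrite -scaleN1r linZ mulN1r. Qed.

End LinearFunctional.

Section Norm.
Variable R : realType.
Notation V := 'rV[R]_2.
Variable N : V -> R.
Hypothesis N_norm : is_norm N.

Lemma nrmZ a u : N (a *: u) = `|a| * N u. Proof. by case: N_norm => _ []. Qed.
Lemma nrmD u v : N (u + v) <= N u + N v. Proof. by case: N_norm => _ []. Qed.
Lemma nrm0 : N 0 = 0. Proof. by rewrite -(scale0r 0) nrmZ normr0 mul0r. Qed.
Lemma nrmN u : N (- u) = N u. Proof. by rewrite -scaleN1r nrmZ normrN1 mul1r. Qed.
Lemma nrm_ge0 u : 0 <= N u.
Proof. by have := nrmD u (- u); rewrite subrr nrm0 nrmN; lra. Qed.

Lemma nrm_gt0 u : u != 0 -> 0 < N u.
Proof.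
move=> u0; rewrite lt_neqAle nrm_ge0 andbT eq_sym.
by apply: contra u0 => /eqP /(proj1 N_norm) ->.
Qed.

Lemma nrm1_neq0 u : N u = 1 -> u != 0.
Proof. by move=> u1; apply/eqP => u0; move: u1; rewrite u0 nrm0; lra. Qed.

Lemma nrm_normalize u : u != 0 -> N ((N u)^-1 *: u) = 1.
Proof.
move=> u0; have Nu := nrm_gt0 u0.
by rewrite nrmZ ger0_norm ?invr_ge0 ?(ltW Nu) // mulVf // gt_eqF.
Qed.

Lemma exists_unit : exists u : V, N u = 1.
Proof.
exists ((N (const_mx 1))^-1 *: const_mx 1); apply: nrm_normalize.
by apply/eqP => /(congr1 (@c0 _)); rewrite c00 /c0 mxE; apply/eqP; rewrite oner_eq0.
Qed.

Lemma nrm_interpolate (v w : V) s c :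
  N (v + s *: w) <= 1 -> N (v - s *: w) <= 1 -> `|c| <= `|s| -> N (v + c *: w) <= 1.
Proof.
move=> hp hm cs; have [s0|s0] := eqVneq s 0.
  by move: cs hp; rewrite s0 normr0 scale0r normr_le0 => /eqP ->; rewrite scale0r.
set l := c / s.
have l1 : `|l| <= 1 by rewrite normrM normrV ?unitfE // ler_pdivrMr ?normr_gt0 // mul1r.
have -> : v + c *: w = ((1 + l) / 2) *: (v + s *: w) + ((1 - l) / 2) *: (v - s *: w).
  by apply: rowv2P; rewrite !cE /l; field.
apply: le_trans (nrmD _ _) _; rewrite !nrmZ.
move: l1; rewrite ler_norml => /andP [l1 l2].
by rewrite !ger0_norm ?divr_ge0 //; [nra | lra | lra].
Qed.

Lemma strictly_convex_pm (y v : V) : strictly_convex N -> N y = 1 ->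
  N (y + v) <= 1 -> N (y - v) <= 1 -> v = 0.
Proof.
move=> sc y1 hp hm; apply/eqP; apply: contraT => v0.
have mid : 2^-1 *: ((y + v) + (y - v)) = y by apply: rowv2P; rewrite !cE; field.
have := nrmD (2^-1 *: (y + v)) (2^-1 *: (y - v)).
rewrite -scalerDr mid !nrmZ y1 ger0_norm ?invr_ge0 ?ler0n // => hmid.
have p1 : N (y + v) = 1 by apply/eqP; rewrite eq_le hp /=; lra.
have m1 : N (y - v) = 1 by apply/eqP; rewrite eq_le hm /=; lra.
have pm : y + v != y - v.
  apply: contra v0 => /eqP e; apply/eqP/rowv2P;
  have := congr1 (@c0 _) e; have := congr1 (@c1 _) e; rewrite !cE; lra.
by have := sc _ _ p1 m1 pm; rewrite mid y1 ltxx.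
Qed.

End Norm.

Section Support.
Variable R : realType.
Notation V := 'rV[R]_2.
Variable N : V -> R.
Hypothesis N_norm : is_norm N.

(* [s] is the infimum of the quotients [N (t x + e) - t], which the triangle
   inequality bounds below by every [t' - N (t' x - e)]. *)
Lemma exists_support_slope (x e : V) : N x = 1 ->
  exists s, forall a b, a + s * b <= N (a *: x + b *: e).
Proof.
move=> x1.
have chord t t' : t - N (t *: x - e) <= N (t' *: x + e) - t'.
  have := nrmD N_norm (t' *: x + e) (t *: x - e).
  rewrite addrACA subrr addr0 -scalerDl (nrmZ N_norm) x1 mulr1.
  by have := ler_norm (t' + t); lra.
pose E := [set N (t *: x + e) - t | t in [set: R]].
have E_lb : has_lbound E by exists (0 - N (0 *: x - e)) => _ [t _ <-]; apply: chord.
have s_le t : inf E <= N (t *: x + e) - t by apply: ge_inf => //; exists t.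
have le_s t : t - N (t *: x - e) <= inf E.
  by apply: lb_le_inf => [|_ [t' _ <-]]; [exists (N (0 *: x + e) - 0), 0 | ].
exists (inf E) => a b; have [b0|b0|->] := ltgtP b 0.
- have -> : a *: x + b *: e = (- b) *: ((a / - b) *: x - e).
    by apply: rowv2P; rewrite !cE; field; rewrite lt_eqF.
  rewrite (nrmZ N_norm) gtr0_norm ?oppr_gt0 //.
  have nb : 0 <= - b by rewrite oppr_ge0 ltW.
  have := ler_wpM2l nb (le_s (a / - b)).
  rewrite mulrBr mulrCA divff ?mulr1 ?oppr_eq0 ?lt_eqF //; lra.
- have -> : a *: x + b *: e = b *: ((a / b) *: x + e).
    by apply: rowv2P; rewrite !cE; field; rewrite gt_eqF.
  rewrite (nrmZ N_norm) gtr0_norm //.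
  have := ler_wpM2l (ltW b0) (s_le (a / b)).
  rewrite mulrBr mulrCA divff ?mulr1 ?gt_eqF //; lra.
- by rewrite mulr0 addr0 scale0r addr0 (nrmZ N_norm) x1 mulr1 ler_norm.
Qed.

Lemma exists_support (x : V) : N x = 1 -> exists f, support_functional N x f.
Proof.
move=> x1; set e := perp x.
have d0 : det2 x e != 0 by apply/det2_perp_neq0/(nrm1_neq0 N_norm).
have [s hs] := exists_support_slope e x1.
pose f u := det2 u e / det2 x e + s * (det2 x u / det2 x e).
have f_lin : lin_functional f.
  by move=> a u v; rewrite /f det2Dl det2Zl det2Dr det2Zr; field.
have le_N u : f u <= N u by rewrite /f {3}(det2_decomp u d0); apply: hs.
exists f; split => //; split; first by rewrite /f det2xx mul0r mulr0 addr0 divff.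
move=> u; rewrite ler_norml le_N andbT.
by have := le_N (- u); rewrite (nrmN N_norm) (linN f_lin); lra.
Qed.

Lemma support_orth (x z : V) f : N x = 1 -> support_functional N x f ->
  f z = 0 -> bj_orth N x z.
Proof.
move=> x1 [f_lin [fx f_le]] fz l.
by have := f_le (x + l *: z); rewrite (linD f_lin) (linZ f_lin) fz mulr0 addr0 fx normr1 x1.
Qed.

Lemma orth_det2_neq0 (x z : V) : N x = 1 -> z != 0 -> bj_orth N x z -> det2 x z != 0.
Proof.
move=> x1 z0 xz; apply/eqP => /(det2_eq0 (nrm1_neq0 N_norm x1)) [c zc].
have c0 : c != 0 by apply: contra z0 => /eqP c0; rewrite zc c0 scale0r.
have := xz (- c^-1); rewrite zc scalerA mulNr mulVf // scaleN1r subrr.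
by rewrite (nrm0 N_norm) x1; lra.
Qed.

Lemma orth_support (x z : V) : N x = 1 -> z != 0 -> bj_orth N x z ->
  support_functional N x (fun u => det2 u z / det2 x z).
Proof.
move=> x1 z0 xz; have d0 := orth_det2_neq0 x1 z0 xz.
split; first by move=> a u v; rewrite det2Dl det2Zl; field.
split; first by rewrite divff.
move=> u; set a := det2 u z / det2 x z; set b := det2 x u / det2 x z.
rewrite (det2_decomp u d0) -/a -/b.
have [->|a0] := eqVneq a 0; first by rewrite normr0 (nrm_ge0 N_norm).
have -> : a *: x + b *: z = a *: (x + (b / a) *: z).
  by rewrite scalerDr scalerA mulrC divfK.
rewrite (nrmZ N_norm); have := xz (b / a); rewrite x1.
by have := normr_ge0 a; nra.
Qed.

Lemma smooth_orth_ker (x z : V) g : smooth N -> N x = 1 ->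
  support_functional N x g -> bj_orth N x z -> g z = 0.
Proof.
move=> sm x1 hg xz; have [->|z0] := eqVneq z 0; first exact: (lin0 (proj1 hg)).
by rewrite (sm x x1 g _ hg (orth_support x1 z0 xz) z) det2xx mul0r.
Qed.

Lemma exists_kernel (x : V) g : N x = 1 -> support_functional N x g ->
  exists2 z, N z = 1 & g z = 0.
Proof.
move=> x1 [g_lin [gx _]]; set w := perp x - g (perp x) *: x.
have gw : g w = 0.
  by rewrite /w (linD g_lin) (linN g_lin) (linZ g_lin) gx mulr1 subrr.
have w0 : w != 0.
  apply: contra (det2_perp_neq0 (nrm1_neq0 N_norm x1)) => /eqP /subr0_eq ->.
  by rewrite det2Zr det2xx mulr0.
exists ((N w)^-1 *: w); first exact: nrm_normalize.
by rewrite (linZ g_lin) gw mulr0.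
Qed.

End Support.

Section Frame.
Variable R : realType.
Notation V := 'rV[R]_2.
Variable N : V -> R.
Hypothesis N_norm : is_norm N.
Variables (x z0 : V) (g : V -> R).
Hypotheses (x1 : N x = 1) (hg : support_functional N x g).
Hypotheses (z01 : N z0 = 1) (gz0 : g z0 = 0).

Definition kercoord (u : V) : R := det2 x u / det2 x z0.

Let g_lin : lin_functional g. Proof. by case: hg. Qed.
Let gx : g x = 1. Proof. by case: hg => _ []. Qed.
Let g_le u : `|g u| <= N u. Proof. by case: hg => _ [_]. Qed.

Let d0 : det2 x z0 != 0.
Proof. exact: orth_det2_neq0 x1 (nrm1_neq0 N_norm z01) (support_orth x1 hg gz0). Qed.

Lemma kercoord_lin : lin_functional kercoord.
Proof. by move=> a u v; rewrite /kercoord det2Dr det2Zr mulrDl mulrA. Qed.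

Lemma kercoord_z0 : kercoord z0 = 1. Proof. exact: divff. Qed.

Lemma frame_decomp u : u = g u *: x + kercoord u *: z0.
Proof.
have -> : g u = det2 u z0 / det2 x z0.
  by rewrite {1}(det2_decomp u d0) (linD g_lin) !(linZ g_lin) gx gz0 mulr1 mulr0 addr0.
exact: det2_decomp.
Qed.

Lemma kercoord_le u : `|kercoord u| <= 2 * N u.
Proof.
have e : kercoord u *: z0 = u - g u *: x by rewrite {2}(frame_decomp u) addrC addKr.
have := nrmD N_norm u (- (g u *: x)); rewrite -e.
rewrite !(nrmZ N_norm) (nrmN N_norm) (nrmZ N_norm) z01 x1 !mulr1.
by have := g_le u; lra.
Qed.

Lemma kernel_colinear v : g v = 0 -> exists2 s, `|s| = 1 & v = (s * N v) *: z0.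
Proof.
move=> gv; have e : v = kercoord v *: z0 by rewrite {1}(frame_decomp v) gv scale0r add0r.
have -> : N v = `|kercoord v| by rewrite {1}e (nrmZ N_norm) z01 mulr1.
by case: ger0P => _; [exists 1 | exists (-1)]; rewrite ?normrN ?normr1 ?mulN1r ?opprK ?mul1r.
Qed.

Lemma exposed_gt1 : (forall v, N v = 1 -> g v = 1 -> v = x) ->
  forall c, c != 0 -> 1 < N (x + c *: z0).
Proof.
move=> expo c c0; set v := x + c *: z0.
have gv : g v = 1 by rewrite /v (linD g_lin) (linZ g_lin) gx gz0 mulr0 addr0.
have := g_le v; rewrite gv normr1 le_eqVlt => /orP [/eqP v1|//].
have := expo v (esym v1) gv; rewrite /v -{2}[x]addr0 => /addrI /eqP.
by rewrite scaler_eq0 (negbTE c0) (negbTE (nrm1_neq0 N_norm z01)).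
Qed.

(* The point [x + t b z0] with [t b = +-r/2], reached by moving from [x]
   towards [u = a x + b z0], has norm at most [1 + (1 - a)]. *)
Lemma gap_nonneg r de : 0 < de -> 2 * de <= r ->
    (forall c, `|c| = r / 2 -> 1 + de <= N (x + c *: z0)) ->
  forall u, N u = 1 -> r <= N (u - x) -> 0 <= g u -> g u <= 1 - de.
Proof.
move=> de0 de_r far u u1 ur gu0; rewrite leNgt; apply/negP => gu_gt.
set a := g u in gu0 gu_gt *; set b := kercoord u.
have a1 : a <= 1 by have := g_le u; rewrite u1 ger0_norm.
have ub : N (u - x) <= (1 - a) + `|b|.
  have -> : u - x = (a - 1) *: x + b *: z0.
    by rewrite {1}(frame_decomp u) -/a -/b; apply: rowv2P; rewrite !cE; ring.
  apply: le_trans (nrmD N_norm _ _) _.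
  by rewrite !(nrmZ N_norm) x1 z01 !mulr1 ler0_norm; lra.
have b_gt : r / 2 < `|b| by lra.
set t := r / 2 / `|b|.
have t0 : 0 < t by rewrite /t divr_gt0 //; lra.
have t1 : t <= 1 by rewrite /t ler_pdivrMr ?mul1r ?ltW //; lra.
have e : x + (t * b) *: z0 = ((1 - t) *: x + t *: u) + (t * (1 - a)) *: x.
  by rewrite {1}(frame_decomp u) -/a -/b; apply: rowv2P; rewrite !cE; ring.
have : N (x + (t * b) *: z0) <= 1 + (1 - a).
  rewrite e; apply: le_trans (nrmD N_norm _ _) _.
  apply: lerD; last by rewrite (nrmZ N_norm) x1 mulr1 normrM !ger0_norm; nra.
  apply: le_trans (nrmD N_norm _ _) _.
  by rewrite !(nrmZ N_norm) x1 u1 !mulr1 !ger0_norm; lra.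
have : 1 + de <= N (x + (t * b) *: z0).
  apply: far; rewrite normrM (gtr0_norm t0) /t divfK //; lra.
lra.
Qed.

Lemma exposed_gap : (forall v, N v = 1 -> g v = 1 -> v = x) ->
  forall r, 0 < r -> exists2 de, 0 < de &
  forall u, N u = 1 -> r <= N (u - x) -> r <= N (u + x) -> `|g u| <= 1 - de.
Proof.
move=> expo r r0.
set m := Num.min (N (x + (r / 2) *: z0)) (N (x + (- (r / 2)) *: z0)).
have m1 : 1 < m by rewrite lt_min !(exposed_gt1 expo) // ?oppr_eq0 gt_eqF //; lra.
set de := Num.min (r / 2) (m - 1).
have de0 : 0 < de by rewrite lt_min; apply/andP; lra.
have de_r : 2 * de <= r.
  have : de <= r / 2 by rewrite ge_min lexx.
  lra.
have far c : `|c| = r / 2 -> 1 + de <= N (x + c *: z0).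
  move=> cr; have : de <= m - 1 by rewrite ge_min lexx orbT.
  have : m <= N (x + (r / 2) *: z0) by rewrite ge_min lexx.
  have : m <= N (x + (- (r / 2)) *: z0) by rewrite ge_min lexx orbT.
  by case: (ger0P c) cr => _ <-; rewrite ?opprK; lra.
have core := gap_nonneg de0 de_r far.
exists de => // u u1 ur ur'; case: (ger0P (g u)) => gu; first exact: core.
have := core (- u); rewrite (nrmN N_norm) (linN g_lin) -opprD (nrmN N_norm).
by apply => //; lra.
Qed.

End Frame.

Section OperatorNorm.
Variable R : realType.
Notation V := 'rV[R]_2.
Variables NX NY : V -> R.
Hypotheses (NX_norm : is_norm NX) (NY_norm : is_norm NY).

Definition contraction (M : 'M[R]_2) : Prop := forall u, NY (u *m M) <= NX u.

Lemma opnorm_bounded M : has_ubound [set NY (u *m M) | u in sphere NX].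
Proof.
have [x x1] := exists_unit NX_norm.
have [g hg] := exists_support NX_norm x1.
have [z z1 gz] := exists_kernel NX_norm x1 hg.
exists (NY (x *m M) + 2 * NY (z *m M)) => _ [u u1 <-].
rewrite (frame_decomp NX_norm x1 hg z1 gz u) mulmxDl -!scalemxAl.
apply: le_trans (nrmD NY_norm _ _) _; rewrite !(nrmZ NY_norm).
have := kercoord_le NX_norm x1 hg z1 gz u; have := proj2 (proj2 hg) u; rewrite u1.
have := nrm_ge0 NY_norm (x *m M); have := nrm_ge0 NY_norm (z *m M).
have := normr_ge0 (g u); have := normr_ge0 (kercoord x z u); nra.
Qed.

Lemma opnorm_le M c : (forall u, NX u = 1 -> NY (u *m M) <= c) -> opnorm NX NY M <= c.
Proof.
move=> hM; apply: ge_sup => [|_ [u u1 <-]]; last exact: hM.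
by have [x x1] := exists_unit NX_norm; exists (NY (x *m M)), x.
Qed.

Lemma contractionP M : opnorm NX NY M <= 1 <-> contraction M.
Proof.
split=> [hM u | hM]; last by apply: opnorm_le => u u1; rewrite -u1.
have [->|u0] := eqVneq u 0; first by rewrite mul0mx !(nrm0 NY_norm, nrm0 NX_norm).
have Nu := nrm_gt0 NX_norm u0.
have : NY (((NX u)^-1 *: u) *m M) <= 1.
  apply: le_trans hM; apply: ub_le_sup; first exact: opnorm_bounded.
  by exists ((NX u)^-1 *: u) => //; apply: nrm_normalize.
rewrite -scalemxAl (nrmZ NY_norm) ger0_norm ?invr_ge0 ?(ltW Nu) // mulrC.
by rewrite ler_pdivrMr // mul1r.
Qed.

Lemma contraction_conv M1 M2 t : 0 <= t <= 1 ->
  contraction M1 -> contraction M2 -> contraction (t *: M1 + (1 - t) *: M2).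
Proof.
move=> /andP [t0 t1] h1 h2 u; rewrite mulmxDr -!scalemxAr.
apply: le_trans (nrmD NY_norm _ _) _; rewrite !(nrmZ NY_norm) !ger0_norm ?subr_ge0 //.
by have := h1 u; have := h2 u; nra.
Qed.

End OperatorNorm.

Section RankOneOperator.
Variable R : realType.
Notation V := 'rV[R]_2.
Variables (NX NY : V -> R) (A : 'M[R]_2) (x : V).
Hypotheses (NX_norm : is_norm NX) (NY_norm : is_norm NY) (smX : smooth NX).
Hypotheses (rankA : \rank A = 1%N) (opA : opnorm NX NY A = 1).
Hypothesis MA : norm_attainment_set NX NY A = [set x; - x].
Local Notation y := (x *m A).
Variables (g h : V -> R) (z0 w0 : V).
Hypotheses (hg : support_functional NX x g) (z01 : NX z0 = 1) (gz0 : g z0 = 0).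
Hypotheses (hh : support_functional NY y h) (w01 : NY w0 = 1) (hw0 : h w0 = 0).

Lemma attained_x : NX x = 1 /\ NY y = 1.
Proof.
have : norm_attainment_set NX NY A x by rewrite MA; left.
by case=> -> ->.
Qed.

Let x1 : NX x = 1. Proof. exact: attained_x.1. Qed.
Let y1 : NY y = 1. Proof. exact: attained_x.2. Qed.
Let g_lin : lin_functional g. Proof. by case: hg. Qed.
Let gx : g x = 1. Proof. by case: hg => _ []. Qed.
Let h_lin : lin_functional h. Proof. by case: hh. Qed.
Let hy : h y = 1. Proof. by case: hh => _ []. Qed.

Lemma A_contraction : contraction NX NY A.
Proof. by apply/(contractionP NX_norm NY_norm); rewrite opA. Qed.

(* [u A] is a multiple of [y]; the coefficient [h (u A)] is a support
   functional at [x], hence equals [g u] by smoothness of X. *)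
Lemma rank_one_factor u : u *m A = g u *: y.
Proof.
have [v v0 vA] : exists2 v : V, v != 0 & v *m A = 0.
  by apply/det0P; rewrite det_rank_lt ?rankA.
have xv : det2 x v != 0.
  apply/eqP => /(det2_eq0 (nrm1_neq0 NX_norm x1)) [c vc].
  have c0 : c != 0 by apply: contra v0 => /eqP c0; rewrite vc c0 scale0r.
  move: vA; rewrite vc -scalemxAl => /eqP; rewrite scaler_eq0 (negbTE c0) /=.
  by apply/negP/(nrm1_neq0 NY_norm).
have uA w : w *m A = (det2 w v / det2 x v) *: y.
  by rewrite {1}(det2_decomp w xv) mulmxDl -!scalemxAl vA scaler0 addr0.
have hA : support_functional NX x (fun w => h (w *m A)).
  split; first by move=> a w w'; rewrite mulmxDl -scalemxAl h_lin.
  split=> // w; apply: le_trans (A_contraction w); exact: (proj2 (proj2 hh)).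
by have := smX x1 hA hg u; rewrite /= uA (linZ h_lin) hy mulr1 => ->.
Qed.

Lemma support_exposes v : NX v = 1 -> g v = 1 -> v = x.
Proof.
move=> v1 gv; have : norm_attainment_set NX NY A v.
  by split=> //; rewrite rank_one_factor gv scale1r y1 opA.
rewrite MA => -[//|/= vx]; move: gv; rewrite vx (linN g_lin) gx.
by move=> ?; exfalso; lra.
Qed.

Section NotCPPExtreme.
Hypotheses (smY : smooth NY) (scY : strictly_convex NY).

Lemma pm_contraction_fixes_x S :
  contraction NX NY (A + S) -> contraction NX NY (A - S) -> x *m S = 0.
Proof.
move=> hp hm; apply: (strictly_convex_pm NY_norm scY y1).
  by have := hp x; rewrite mulmxDr x1.
by have := hm x; rewrite mulmxBr x1.
Qed.

(* [h (_ *m (A + S))] is a support functional at [x], hence equals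
   [g = h (_ *m A)] by smoothness of X. *)
Lemma pm_contraction_ker S :
  contraction NX NY (A + S) -> contraction NX NY (A - S) -> forall u, h (u *m S) = 0.
Proof.
move=> hp hm u.
have hAS : support_functional NX x (fun w => h (w *m (A + S))).
  split; first by move=> a w w'; rewrite mulmxDl -scalemxAl h_lin.
  split; first by rewrite mulmxDr (pm_contraction_fixes_x hp hm) addr0.
  move=> w; apply: le_trans (hp w); exact: (proj2 (proj2 hh)).
have := smX x1 hAS hg u; rewrite /= mulmxDr (linD h_lin) rank_one_factor.
by rewrite (linZ h_lin) hy mulr1; lra.
Qed.

Lemma CPP_of_pm_contraction S : S != 0 ->
  contraction NX NY (A + S) -> contraction NX NY (A - S) -> CPP NX NY x y.
Proof.
move=> S0 hp hm; have xS := pm_contraction_fixes_x hp hm.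
have z0S : z0 *m S != 0.
  apply: contra S0 => /eqP z0S; apply/eqP/mx_eq0 => u.
  rewrite (frame_decomp NX_norm x1 hg z01 gz0 u) mulmxDl -!scalemxAl xS z0S.
  by rewrite !scaler0 addr0.
split=> //; split=> //; exists 1, (NY (z0 *m S)); split=> //.
split=> [|z w xz z1 yw w1 a b]; first exact: nrm_gt0.
rewrite in_setE => -[_ /= v1].
have gz := smooth_orth_ker NX_norm smX x1 hg xz.
have [s s1 zS] : exists2 s, `|s| = 1 & z *m S = (s * NY (z0 *m S)) *: w.
  have [s1 s11 ->] := kernel_colinear NX_norm x1 hg z01 gz0 gz.
  have hw := smooth_orth_ker NY_norm smY y1 hh yw.
  have [s2 s21 e2] := kernel_colinear NY_norm y1 hh w1 hw (pm_contraction_ker hp hm z0).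
  exists (s1 * s2); first by rewrite normrM s11 s21 mulr1.
  by rewrite z1 mulr1 -scalemxAl {1}e2 scalerA mulrA.
have vA : (a *: x + b *: z) *m A = a *: y.
  by rewrite rank_one_factor (linD g_lin) !(linZ g_lin) gx gz mulr1 mulr0 addr0.
have vS : (a *: x + b *: z) *m S = (b * (s * NY (z0 *m S))) *: w.
  by rewrite mulmxDl -!scalemxAl xS zS scaler0 add0r scalerA.
apply: (@nrm_interpolate _ _ NY_norm _ _ (b * (s * NY (z0 *m S)))).
- by have := hp (a *: x + b *: z); rewrite mulmxDr vA vS v1.
- by have := hm (a *: x + b *: z); rewrite mulmxBr vA vS v1.
- by rewrite !normrM s1 mul1r.
Qed.

Lemma extreme_of_not_CPP : ~ CPP NX NY x y -> extreme_contraction NX NY A.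
Proof.
move=> nCPP; split=> // B C t hB hC /andP [t0 t1] eA.
have [BA|BA] := eqVneq B A.
  split=> //; have : (1 - t) *: (C - A) = t *: B + (1 - t) *: C - A.
    by rewrite BA; apply/matrixP => i j; rewrite !mxE; ring.
  rewrite -eA subrr => /eqP; rewrite scaler_eq0 subr_eq0 eq_sym lt_eqF //=.
  by rewrite subr_eq0 => /eqP.
have cB := proj1 (contractionP NX_norm NY_norm B) hB.
have cC := proj1 (contractionP NX_norm NY_norm C) hC.
have t01 : 0 <= t <= 1 by rewrite !ltW.
exfalso; apply: nCPP; apply: (@CPP_of_pm_contraction (t *: (B - A))).
- by rewrite scaler_eq0 subr_eq0 (negbTE BA) gt_eqF.
- have -> : A + t *: (B - A) = t *: B + (1 - t) *: A.
    by apply/matrixP => i j; rewrite !mxE; ring.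
  exact (contraction_conv NY_norm t01 cB A_contraction).
- have -> : A - t *: (B - A) = t *: A + (1 - t) *: C.
    by rewrite {1}eA; apply/matrixP => i j; rewrite !mxE; ring.
  exact (contraction_conv NY_norm t01 A_contraction cC).
Qed.

End NotCPPExtreme.

Lemma CPP_near_bound : CPP NX NY x y -> exists r mu, [/\ 0 < r, 0 < mu &
  forall u c, NX u = 1 -> NX (u - x) < r -> `|c| <= mu * `|kercoord x z0 u| ->
  NY (g u *: y + c *: w0) <= 1].
Proof.
move=> [_ [_ [r [mu [r0 [mu0 cpp]]]]]]; exists r, mu; split=> // u c u1 ur cu.
have xz0 := support_orth x1 hg gz0.
have yw0 := support_orth y1 hh hw0.
have yw0N : bj_orth NY y (- w0).
  by apply: support_orth y1 hh _; rewrite (linN h_lin) hw0 oppr0.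
have uxr : g u *: x + kercoord x z0 u *: z0 \in oball NX x r `&` sphere NX.
  by rewrite -(frame_decomp NX_norm x1 hg z01 gz0) in_setE.
have := cpp z0 (- w0) xz0 z01 yw0N; rewrite (nrmN NY_norm) => /(_ w01 _ _ uxr).
rewrite scalerN => /(nrm_interpolate NY_norm (cpp z0 w0 xz0 z01 yw0 w01 _ _ uxr)).
by apply; rewrite normrM (gtr0_norm mu0) mulrC.
Qed.

Lemma CPP_perturbation_bound : CPP NX NY x y -> exists2 ep, 0 < ep &
  forall u c, NX u = 1 -> `|c| <= ep * `|kercoord x z0 u| -> NY (g u *: y + c *: w0) <= 1.
Proof.
move=> /CPP_near_bound [r [mu [r0 mu0 near]]].
have [de de0 gap] := exposed_gap NX_norm x1 hg z01 gz0 support_exposes r0.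
exists (Num.min mu (de / 2)) => [|u c u1 cu]; first by rewrite lt_min mu0 divr_gt0.
have cmu : `|c| <= mu * `|kercoord x z0 u|.
  by apply: le_trans cu _; apply: ler_wpM2r; rewrite ?normr_ge0 ?ge_min ?lexx.
have [ur|ur] := ltP (NX (u - x)) r; first exact: near.
have [ur'|ur'] := ltP (NX (u + x)) r.
  have := near (- u) (- c); rewrite (nrmN NX_norm) (linN g_lin) (linN (kercoord_lin x z0)).
  rewrite -opprD (nrmN NX_norm) !normrN !scaleNr -opprD (nrmN NY_norm); exact.
have ep_de : Num.min mu (de / 2) <= de / 2 by rewrite ge_min lexx orbT.
have ku := kercoord_le NX_norm x1 hg z01 gz0 u; rewrite u1 mulr1 in ku.
have cde : `|c| <= de.
  apply: le_trans cu _; have := normr_ge0 (kercoord x z0 u).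
  have : 0 < Num.min mu (de / 2) by rewrite lt_min mu0 divr_gt0.
  nra.
apply: le_trans (nrmD NY_norm _ _) _; rewrite !(nrmZ NY_norm) y1 w01 !mulr1.
by have := gap u u1 ur ur'; lra.
Qed.

Lemma not_CPP_of_extreme : extreme_contraction NX NY A -> ~ CPP NX NY x y.
Proof.
move=> [_ ext] /CPP_perturbation_bound [ep ep0 bound].
set S := (perp x)^T *m ((ep / det2 x z0) *: w0).
have uS u : u *m S = (ep * kercoord x z0 u) *: w0.
  by rewrite mul_tr_perp scalerA /kercoord mulrCA mulrA.
have pmS s : `|s| = 1 -> opnorm NX NY (A + s *: S) <= 1.
  move=> s1; apply: opnorm_le => // u u1.
  rewrite mulmxDr -scalemxAr uS rank_one_factor scalerA; apply: bound => //.
  by rewrite normrM normrM s1 mul1r (gtr0_norm ep0).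
have half : 0 < (2 : R)^-1 < 1 by apply/andP; split; lra.
have eA : A = 2^-1 *: (A + 1 *: S) + (1 - 2^-1) *: (A + (-1) *: S).
  by apply/matrixP => i j; rewrite !mxE; field.
have [SA _] := ext _ _ _ (pmS 1 (normr1 _)) (pmS (-1) (normrN1 _)) half eA.
have S0 : S = 0 by apply: (addrI A); rewrite addr0 -[S]scale1r.
have := uS z0; rewrite S0 mulmx0 (kercoord_z0 NX_norm x1 hg z01 gz0) mulr1.
move/esym/eqP; rewrite scaler_eq0 gt_eqF //=.
exact/negP/(nrm1_neq0 NY_norm w01).
Qed.

End RankOneOperator.

Unset Implicit Arguments.

Theorem mainTheorem8 (R : realType) (NX NY : 'rV[R]_2 -> R) (A : 'M[R]_2)
  (x : 'rV[R]_2) :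
  is_norm NX -> is_norm NY ->
  smooth NX -> smooth NY -> strictly_convex NY ->
  \rank A = 1%N ->
  opnorm NX NY A = 1 ->
  norm_attainment_set NX NY A = [set x; - x] ->
  (extreme_contraction NX NY A <-> ~ CPP NX NY x (x *m A)).
Proof.
move=> NX_norm NY_norm smX smY scY rankA opA MA.
have [x1 y1] := attained_x opA MA.
have [g hg] := exists_support NX_norm x1.
have [z0 z01 gz0] := exists_kernel NX_norm x1 hg.
have [h hh] := exists_support NY_norm y1.
have [w0 w01 hw0] := exists_kernel NY_norm y1 hh.
split; first exact (not_CPP_of_extreme NX_norm NY_norm smX rankA opA MA hg z01 gz0 hh w01 hw0).
exact (extreme_of_not_CPP NX_norm NY_norm smX rankA opA MA hg z01 gz0 hh smY scY).
Qed.
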